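(* Let $n\ge0$. The space $\mathrm C^n(K,\mathcal D)^S$ is nontrivial (different from $\{0\}$) if and only if there exist an $n$-simplex $y\in\Sigma_n(K)$ and a nonzero function $f_0\in\mathcal D_{|y|}$ such that $f_0\circ s^{-1}=f_0$ for every $s$ in the stabilizer $S_y=\{s\in S:s(y)=y\}$.
   Context: $X$ is a spacetime, $S$ a group of conformal diffeomorphisms of $X$, and $K$ a base of the topology of $X$ consisting of open relatively compact subsets, globally invariant under $S$ ($s(o)\in K$ for $o\in K$, $s\in S$), ordered by inclusion. Simplices: $\Sigma_0(K)=K$; for $n\ge1$ an $n$-simplex is $x=(|x|;\partial_0x,\dots,\partial_nx)$ with $|x|\in K$, $\partial_ix\in\Sigma_{n-1}(K)$, $|\partial_ix|\subseteq|x|$ (for $n=1$, $|\partial_ix|=\partial_ix$), and, for $n\ge2$, $\partial_i\partial_jx=\partial_j\partial_{i+1}x$ for $i\ge j$. $S$ acts on simplices by applying $s$ to the support and recursively to the faces. $\mathcal D(X)$ is the space of real-valued compactly supported smooth functions on $X$ and, for $a\in K$, $\mathcal D_a$ is the subspace of functions vanishing outside the closure of $a$. $\mathrm C^n(K,\mathcal D)$ is the vector space of maps $f:\Sigma_n(K)\ni x\mapsto f_x\in\mathcal D_{|x|}$, with $S$-action $(sf)_x:=f_{s(x)}\circ s$, and $\mathrm C^n(K,\mathcal D)^S=\{f:(sf)_x=f_x\ \forall x,\ \forall s\in S\}$. *)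

From HB Require Import structures.
From mathcomp Require Import all_boot all_order all_algebra.
From mathcomp Require Import all_classical all_reals all_analysis.
Set Implicit Arguments. Unset Strict Implicit. Unset Printing Implicit Defensive.
Import Order.TTheory GRing.Theory Num.Theory.
Import numFieldNormedType.Exports.
Local Open Scope classical_set_scope.
Local Open Scope ring_scope.

Inductive simplex (T : Type) : Type :=
  Simp : set T -> seq (simplex T) -> simplex T.

Definition supp {T} (x : simplex T) : set T := let: Simp a _ := x in a.
Definition faces {T} (x : simplex T) : seq (simplex T) := let: Simp _ l := x in l.
Definition face {T} (i : nat) (x : simplex T) : simplex T :=
  nth (Simp set0 [::]) (faces x) i.

(* x \in Sigma_n(K).  A 0-simplex o \in K is represented as Simp o [::]. *)
Fixpoint is_simplex {T} (K : set (set T)) (n : nat) (x : simplex T) : Prop :=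
  match n with
  | 0 => K (supp x) /\ faces x = [::]
  | m.+1 =>
      [/\ K (supp x), size (faces x) = m.+2,
          (forall i, (i <= m.+1)%N ->
             is_simplex K m (face i x) /\ supp (face i x) `<=` supp x)
        & (forall i j, (0 < m)%N -> (j <= i)%N -> (i <= m)%N ->
             face i (face j x) = face j (face i.+1 x))]
  end.

Fixpoint sact {T} (s : T -> T) (x : simplex T) : simplex T :=
  match x with Simp a l => Simp (s @` a) (map (sact s) l) end.

(* S is a group of homeomorphisms of X (abstracting "conformal diffeomorphisms") *)
Definition homeo_group {X : topologicalType} (S : set (X -> X)) : Prop :=
  [/\ S id,
      (forall s t, S s -> S t -> S (s \o t)),
      (forall s, S s -> exists2 t, S t & cancel s t /\ cancel t s)
    & (forall s, S s -> continuous s)].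

Definition invariant_base {X : topologicalType} (S : set (X -> X))
    (K : set (set X)) : Prop :=
  [/\ (forall o, K o -> open o /\ compact (closure o)),
      (forall U, open U -> forall p, U p -> exists2 o, K o & o p /\ o `<=` U)
    & (forall s o, S s -> K o -> K (s @` o))].

(* D is a real vector space of compactly supported continuous functions
   stable under composition with the elements of S (abstracting D(X)) *)
Definition invariant_fun_space {X : topologicalType} {R : realType}
    (S : set (X -> X)) (D : set (X -> R)) : Prop :=
  [/\ D (fun _ => 0),
      (forall f g, D f -> D g -> D (f \+ g)),
      (forall (c : R) f, D f -> D (fun p => c * f p)),
      (forall f, D f -> continuous f /\
                 exists2 C, compact C & forall p, ~ C p -> f p = 0)
    & (forall s f, S s -> D f -> D (f \o s))].

Definition Dsub {X : topologicalType} {R : realType} (D : set (X -> R))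
    (a : set X) : set (X -> R) :=
  [set g | D g /\ forall p, ~ closure a p -> g p = 0].

Definition cochain {X : topologicalType} {R : realType} (K : set (set X))
    (D : set (X -> R)) (n : nat) (f : simplex X -> (X -> R)) : Prop :=
  forall x, is_simplex K n x -> Dsub D (supp x) (f x).

Definition invariant_cochain {X : topologicalType} {R : realType}
    (S : set (X -> X)) (K : set (set X)) (D : set (X -> R)) (n : nat)
    (f : simplex X -> (X -> R)) : Prop :=
  cochain K D n f /\
  forall s x, S s -> is_simplex K n x -> f (sact s x) \o s = f x.

(* C^n(K,D)^S is nontrivial: contains an element that is not the zero cochain
   (cochains are maps on Sigma_n(K) only) *)
Definition nontrivial_invariant_cochains {X : topologicalType} {R : realType}
    (S : set (X -> X)) (K : set (set X)) (D : set (X -> R)) (n : nat) : Prop :=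
  exists f, invariant_cochain S K D n f /\
    exists2 x, is_simplex K n x & f x <> (fun _ => 0).

From HB Require Import structures.
From mathcomp Require Import all_boot all_order all_algebra.
From mathcomp Require Import all_classical all_reals all_analysis.
Local Open Scope classical_set_scope.
Local Open Scope ring_scope.

Set Implicit Arguments.
Unset Strict Implicit.

(* An invariant cochain is determined on the S-orbit of a simplex y by its
   value f0 at y, via f_{t(y)} = f0 \o t^-1; this is well defined exactly when
   f0 is invariant under the stabilizer of y.  Conversely, any such f0 (with
   support in the closure of |y|) extends to the orbit by this formula and by
   zero off the orbit, which gives a nonzero invariant cochain. *)

Lemma sact_comp {T} (f g : T -> T) (x : simplex T) :
  sact (f \o g) x = sact f (sact g x).
Proof.
move: x; fix IH 1; case=> a l /=; rewrite image_comp; congr Simp.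
by elim: l => //= z l IHl; rewrite IH IHl.
Qed.

Lemma sact_id {T} (x : simplex T) : sact id x = x.
Proof.
move: x; fix IH 1; case=> a l /=; rewrite image_id; congr Simp.
by elim: l => //= z l IHl; rewrite IH IHl.
Qed.

Lemma supp_sact {T} (s : T -> T) (x : simplex T) : supp (sact s x) = s @` supp x.
Proof. by case: x. Qed.

Lemma closure_sub_preimage_closure {X Y : topologicalType} (f : X -> Y)
    (A : set X) :
  continuous f -> closure A `<=` f @^-1` closure (f @` A).
Proof.
move=> fc; have /closure_id -> : closed (f @^-1` closure (f @` A)).
  by apply: preimage_closed; [move=> z _; exact: fc | exact: closed_closure].
by apply: closureS => z Az; apply: subset_closure; exists z.
Qed.

Lemma vanish_outside_closure_comp {X : topologicalType} {V : Type} (d : V)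
    (g : X -> V) (a : set X) (t ti : X -> X) :
  continuous t -> cancel ti t ->
  (forall p, ~ closure a p -> g p = d) ->
  forall p, ~ closure (t @` a) p -> (g \o ti) p = d.
Proof.
move=> tc tiK gout p np /=; apply: gout => /(closure_sub_preimage_closure tc).
by rewrite /preimage /= tiK.
Qed.

Section OrbitExtension.
Variables (T V : Type) (d : V) (S : set (T -> T)) (y : simplex T) (f0 : T -> V).
Hypothesis S_comp : forall s t, S s -> S t -> S (s \o t).
Hypothesis S_inv : forall s, S s -> exists2 t, S t & cancel s t /\ cancel t s.
Hypothesis f0_stab : forall s sinv, S s -> cancel s sinv -> cancel sinv s ->
  sact s y = y -> f0 \o sinv = f0.

Definition in_orbit (x : simplex T) : Prop :=
  exists ti t, [/\ S t, S ti, cancel t ti, cancel ti t & sact t y = x].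

Definition orbit_extension (x : simplex T) : T -> V :=
  if pselect (in_orbit x) is left H then f0 \o projT1 (cid H) else fun=> d.

Lemma orbit_transport_wd t ti t' t'i :
  S t -> S t'i -> cancel t ti -> cancel ti t -> cancel t' t'i -> cancel t'i t' ->
  sact t y = sact t' y -> f0 \o ti = f0 \o t'i.
Proof.
move=> St St'i tK tiK t'K t'iK e.
have stab : sact (t'i \o t) y = y.
  by rewrite sact_comp e -sact_comp (_ : t'i \o t' = id) ?sact_id //; apply: funext.
have -> : f0 \o ti = (f0 \o (ti \o t')) \o t'i by apply: funext => p /=; rewrite t'iK.
rewrite (f0_stab (S_comp St'i St) _ _ stab) //.
- by move=> p /=; rewrite t'iK tK.
- by move=> p /=; rewrite tiK t'K.
Qed.

Lemma orbit_extensionE x t ti : S t -> S ti -> cancel t ti -> cancel ti t ->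
  sact t y = x -> orbit_extension x = f0 \o ti.
Proof.
move=> St Sti tK tiK e; rewrite /orbit_extension; case: pselect => [H|[]].
  case: (cid H) => /= ti' [t' [St' Sti' t'K t'iK e']].
  by apply: (orbit_transport_wd St' Sti) => //; rewrite e e'.
by exists ti, t.
Qed.

Lemma orbit_extension_out x : ~ in_orbit x -> orbit_extension x = fun=> d.
Proof. by move=> xN; rewrite /orbit_extension; case: pselect. Qed.

Lemma in_orbit_sact s x : S s -> in_orbit (sact s x) -> in_orbit x.
Proof.
move=> Ss [ti [t [St Sti tK tiK e]]]; have [si Ssi [sK siK]] := S_inv Ss.
exists (ti \o s), (si \o t); split; [exact: S_comp|exact: S_comp| | |].
- by move=> p /=; rewrite siK tK.
- by move=> p /=; rewrite tiK sK.
- by rewrite sact_comp e -sact_comp (_ : si \o s = id) ?sact_id //; apply: funext.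
Qed.

Lemma orbit_extension_invariant s x : S s ->
  orbit_extension (sact s x) \o s = orbit_extension x.
Proof.
move=> Ss; have [[ti [t [St Sti tK tiK e]]]|xN] := pselect (in_orbit x); last first.
  by rewrite !orbit_extension_out // => /(in_orbit_sact Ss).
have [si Ssi [sK siK]] := S_inv Ss.
rewrite (orbit_extensionE St Sti tK tiK e).
rewrite (@orbit_extensionE _ (s \o t) (ti \o si)); [|exact: S_comp|exact: S_comp| | |].
- by apply: funext => p /=; rewrite sK.
- by move=> p /=; rewrite sK tK.
- by move=> p /=; rewrite tiK siK.
- by rewrite sact_comp e.
Qed.

End OrbitExtension.

Theorem proposition4p10 (R : realType) (X : topologicalType)
    (S : set (X -> X)) (K : set (set X)) (D : set (X -> R)) (n : nat) :
  hausdorff_space X -> homeo_group S -> invariant_base S K ->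
  invariant_fun_space S D ->
  nontrivial_invariant_cochains S K D n <->
  exists2 y, is_simplex K n y &
    exists f0, [/\ Dsub D (supp y) f0, f0 <> (fun _ => 0) &
      forall s sinv, S s -> cancel s sinv -> cancel sinv s ->
        sact s y = y -> f0 \o sinv = f0].
Proof.
move=> _ [S_id S_comp S_inv S_cont] _ [D0 _ _ _ D_comp]; split.
  move=> [f [[f_cochain f_inv] [y yn fy0]]]; exists y => //; exists (f y).
  split=> [||s sinv Ss sK sinvK sy]; first exact: f_cochain.
    exact: fy0.
  rewrite -{1}(f_inv s y Ss yn) sy -compA (_ : s \o sinv = id) //.
  by apply: funext => p /=; rewrite sinvK.
move=> [y yn [f0 [[Df0 f0out] f0_nz f0_stab]]].
pose f := orbit_extension 0 S y f0.
have fy : f y = f0.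
  exact: (orbit_extensionE 0 S_comp f0_stab S_id S_id (fun=> erefl) (fun=> erefl) (sact_id y)).
exists f; split; last by exists y; rewrite // fy.
split=> [x _|s x Ss _]; last exact: (orbit_extension_invariant 0 S_comp S_inv f0_stab x Ss).
have [[ti [t [St Sti tK tiK e]]]|xN] := pselect (in_orbit S y x); last first.
  by rewrite /f orbit_extension_out //; split.
rewrite /f (orbit_extensionE 0 S_comp f0_stab St Sti tK tiK e) -e supp_sact.
split; first exact: D_comp.
exact: (vanish_outside_closure_comp (S_cont t St) tiK f0out).
Qed.
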